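(* Let $\Omega$ be a finite search space. Let $S=\{\phi_i\}_{i}$ be a countable set of decomposable probability-of-success metrics and let $\mathcal{D}$ be a probability distribution over $S$. Then the metric $$\phi'(t,f)=\mathbb{E}_{\phi\sim\mathcal{D}}[\phi(t,f)]=\sum_i \mathcal{D}(\phi_i)\,\phi_i(t,f)$$ is also a decomposable probability-of-success metric.
   Context: A probability-of-success metric $\phi$ assigns to each target set $t\subseteq\Omega$ and information resource $f$ a success probability. It is called decomposable if for each $f$ there exists a probability vector $\mathbf{P}_{\phi,f}\in\mathbb{R}^{|\Omega|}$ (nonnegative entries summing to $1$), not a function of $t$, such that $\phi(t,f)=\mathbf{t}^\top\mathbf{P}_{\phi,f}$ for all $t\subseteq\Omega$, where $\mathbf{t}\in\{0,1\}^{|\Omega|}$ is the indicator vector of $t$. *)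

From HB Require Import structures.
From mathcomp Require Import all_boot all_order all_algebra.
From mathcomp Require Import all_classical all_reals all_analysis.
Set Implicit Arguments. Unset Strict Implicit. Unset Printing Implicit Defensive.
Import Order.TTheory GRing.Theory Num.Theory numFieldNormedType.Exports.
Local Open Scope classical_set_scope.
Local Open Scope ring_scope.

Definition metric (R : realType) (Omega : finType) (F : Type) :=
  {set Omega} -> F -> R.

Definition prob_vector (R : realType) (Omega : finType) (P : Omega -> R) :=
  (forall w, 0 <= P w) /\ \sum_(w : Omega) P w = 1.

(* phi(t,f) = t^T P_{phi,f}, i.e. the sum of P over the indicator's support. *)
Definition decomposable (R : realType) (Omega : finType) (F : Type)
    (phi : metric R Omega F) :=
  forall f : F, exists P : Omega -> R,
    prob_vector P /\ forall t : {set Omega}, phi t f = \sum_(w in t) P w.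

(* A probability distribution on a countable index set, indexed by nat:
   nonnegative weights whose series converges to 1. *)
Definition prob_weights (R : realType) (D : nat -> R) :=
  (forall i, 0 <= D i) /\
  (fun n => \sum_(0 <= i < n) D i) @ \oo --> (1 : R).

Definition mixture (R : realType) (Omega : finType) (F : Type)
    (D : nat -> R) (phis : nat -> metric R Omega F) : metric R Omega F :=
  fun t f => limn (fun n => \sum_(0 <= i < n) (D i * phis i t f)).

From HB Require Import structures.
From mathcomp Require Import all_boot all_order all_algebra.
From mathcomp Require Import all_classical all_reals all_analysis.
Import Order.TTheory GRing.Theory Num.Theory numFieldNormedType.Exports.
Local Open Scope classical_set_scope.
Local Open Scope ring_scope.

(* For each resource f, pick a probability vector [P i] decomposing [phi_i( . , f)];
   the candidate vector for the mixture is the pointwise mixture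
   [sum_i D i * P i w].  Each of these series converges, being dominated by the
   series of the weights, and since a target set is finite, summing over it
   commutes with the limit, so the mixture metric is [t^T] times this vector;
   taking [t = Omega] shows that it sums to [sum_i D i = 1]. *)

Lemma prob_vector_le1 (R : realType) (Omega : finType) (P : Omega -> R) w :
  prob_vector P -> P w <= 1.
Proof.
move=> [P_ge0 <-]; rewrite (bigD1 w) //= lerDl.
by apply: sumr_ge0 => v _.
Qed.

Section MixtureOfProbabilityVectors.
Context {R : realType} {Omega : finType}.
Variables (D : nat -> R) (P : nat -> Omega -> R).
Hypotheses (D_weights : prob_weights D) (P_prob : forall i, prob_vector (P i)).

Definition mixture_vector (w : Omega) : R := limn (series (fun i => D i * P i w)).

Let D_ge0 i : 0 <= D i. Proof. exact: D_weights.1. Qed.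
Let P_ge0 i w : 0 <= P i w. Proof. exact: (P_prob i).1. Qed.

Lemma is_cvg_mixture_series w : cvgn (series (fun i => D i * P i w)).
Proof.
apply: (@series_le_cvg _ _ D) => // [i|i|].
- by rewrite mulr_ge0.
- by rewrite ler_piMr // prob_vector_le1.
- by apply/cvg_ex; exists 1; exact: D_weights.2.
Qed.

Lemma cvg_mixture_vector_sum (A : {pred Omega}) :
  series (fun i => D i * \sum_(w in A) P i w) @ \oo -->
  \sum_(w in A) mixture_vector w.
Proof.
have -> : series (fun i => D i * \sum_(w in A) P i w) =
          (fun n => \sum_(w in A) series (fun i => D i * P i w) n).
  apply: funext => n; rewrite /series /= exchange_big /=.
  by apply: eq_bigr => i _; rewrite mulr_sumr.
by apply: cvg_big => [|w _]; [exact: add_continuous | exact: is_cvg_mixture_series].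
Qed.

Lemma prob_vector_mixture : prob_vector mixture_vector.
Proof.
split=> [w|].
  apply: limr_ge; first exact: is_cvg_mixture_series.
  by apply: nearW => n; apply: sumr_ge0 => i _; rewrite mulr_ge0.
have := cvg_mixture_vector_sum predT.
have -> : series (fun i => D i * \sum_(w in predT) P i w) = series D.
  apply: funext => n; apply: eq_bigr => i _.
  by rewrite (P_prob i).2 mulr1.
by move=> sum_cvg; apply: (cvg_unique _ sum_cvg D_weights.2).
Qed.

End MixtureOfProbabilityVectors.

Theorem lemma3 (R : realType) (Omega : finType) (F : Type)
    (phis : nat -> metric R Omega F) (D : nat -> R) :
  (forall i, decomposable (phis i)) ->
  prob_weights D ->
  decomposable (mixture D phis).
Proof.
move=> phis_dec D_weights f.
have [P P_dec] := choice (fun i => phis_dec i f).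
have P_prob i : prob_vector (P i) := (P_dec i).1.
exists (mixture_vector D P); split; first exact: prob_vector_mixture.
move=> t; rewrite /mixture.
have -> : (fun n => \sum_(0 <= i < n) D i * phis i t f) =
          series (fun i => D i * \sum_(w in t) P i w).
  by apply: funext => n; apply: eq_bigr => i _; rewrite (P_dec i).2.
exact/cvg_lim/(cvg_mixture_vector_sum _ _ D_weights P_prob t).
Qed.
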